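(* Let $m\ge1$, let ${\bf d}^m=(d_1,\dots,d_m)$ be positive integers, and let $j\ge2$ be an integer, with the $d_i$ ordered so that $d_1,\dots,d_{k_j}$ are exactly those divisible by $j$ ($0\le k_j\le m$). Put $s_m=\sum_{i=1}^m d_i$, $\pi_m=\prod_{i=1}^m d_i$ and ${\bf d}^m_j=(d_1,\dots,d_{k_j},\,jd_{k_j+1},\dots,jd_m)$. Then for every $s$, $$\frac{j^{k_j-m}}{(m-1)!\,\pi_m}\sum_{r_{k_j+1}=0}^{j-1}\cdots\sum_{r_m=0}^{j-1} B^{(m)}_{m-1}\Big(s+s_m+\sum_{i=k_j+1}^m r_id_i,\ {\bf d}^m_j\Big)=\frac{1}{(m-1)!\,\pi_m}B^{(m)}_{m-1}\big(s+s_m,{\bf d}^m\big),$$ and the right-hand side equals the polynomial part $W_1(s,{\bf d}^m)$ of the restricted partition function.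
   Context: For an integer $q\ge1$ and nonzero numbers ${\bf e}=(e_1,\dots,e_q)$, the Bernoulli polynomials of higher order $B^{(q)}_n(x,{\bf e})$ are defined by $$\frac{e^{xt}\,t^q\prod_{i=1}^q e_i}{\prod_{i=1}^q (e^{e_it}-1)}=\sum_{n=0}^\infty B^{(q)}_n(x,{\bf e})\frac{t^n}{n!}.$$ $W_1(s,{\bf d}^m)$ denotes the first Sylvester wave, i.e. the coefficient of $t^{-1}$ in the Laurent expansion in $t$ of $e^{st}/\prod_{k=1}^m(1-e^{-d_kt})$; it is known to equal $\frac{1}{(m-1)!\,\pi_m}B^{(m)}_{m-1}(s+s_m,{\bf d}^m)$. *)

From HB Require Import structures.
From mathcomp Require Import all_boot all_order all_algebra.
Set Implicit Arguments. Unset Strict Implicit. Unset Printing Implicit Defensive.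
Import Order.TTheory GRing.Theory Num.Theory.
Local Open Scope ring_scope.

Section PS.
Variable R : fieldType.

Definition ps := nat -> R.

Definition psmul (f g : ps) : ps :=
  fun n => \sum_(i < n.+1) f i * g (n - i)%N.

Definition ps1 : ps := fun n => (n == 0)%:R.

Definition psexp (a : R) : ps := fun n => a ^+ n / (n`!)%:R.

Fixpoint psdiv_seq (f g : ps) (n : nat) : seq R :=
  match n with
  | 0 => [:: f 0%N / g 0%N]
  | n'.+1 =>
      let s := psdiv_seq f g n' in
      rcons s ((f n - \sum_(1 <= k < n.+1) g k * nth 0 s (n - k)%N) / g 0%N)
  end.

Definition psdiv (f g : ps) : ps := fun n => nth 0 (psdiv_seq f g n) n.

(* (e^{c t} - 1)/(c t) = sum_k c^k t^k/(k+1)! *)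
Definition bern_factor (c : R) : ps := fun k => c ^+ k / (k.+1)`!%:R.

(* Bernoulli polynomials of higher order B^{(q)}_n(x, e):
   e^{xt} t^q prod e_i / prod (e^{e_i t} - 1) = e^{xt} / prod_i ((e^{e_i t}-1)/(e_i t))
   = sum_n B^{(q)}_n(x,e) t^n/n!  (as formal power series). *)
Definition bernoulliH (q : nat) (e : 'I_q -> R) : ps :=
  \big[psmul/ps1]_(i < q) bern_factor (e i).

Definition higherBernoulli (q n : nat) (x : R) (e : 'I_q -> R) : R :=
  (n`!)%:R * psdiv (psexp x) (bernoulliH e) n.

(* (1 - e^{-c t})/t = sum_k -(-c)^{k+1} t^k/(k+1)! *)
Definition sylv_factor (c : R) : ps := fun k => - (- c) ^+ k.+1 / (k.+1)`!%:R.

(* First Sylvester wave W_1(s, d^m): coefficient of t^{-1} in the Laurent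
   expansion of e^{st} / prod_k (1 - e^{-d_k t})
   = t^{-m} e^{st} / prod_k ((1 - e^{-d_k t})/t),
   i.e. the coefficient of t^{m-1} in e^{st} / prod_k ((1 - e^{-d_k t})/t). *)
Definition sylvesterW1 (m : nat) (s : R) (d : 'I_m -> nat) : R :=
  psdiv (psexp s) (\big[psmul/ps1]_(k < m) sylv_factor (d k)%:R) m.-1.

End PS.

Definition sumd (m : nat) (d : 'I_m -> nat) : nat := \sum_(i < m) d i.
Definition prodd (m : nat) (d : 'I_m -> nat) : nat := \prod_(i < m) d i.

(* d^m_j = (d_1,...,d_{k_j}, j d_{k_j+1}, ..., j d_m)  (0-based: indices < k kept) *)
Definition dscaled (m : nat) (d : 'I_m -> nat) (j k : nat) : 'I_m -> nat :=
  fun i => if (i < k)%N then d i else (j * d i)%N.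

From HB Require Import structures.
From mathcomp Require Import all_boot all_order all_algebra.
From mathcomp Require Import ring.
From Stdlib Require Import FunctionalExtensionality.
Set Implicit Arguments. Unset Strict Implicit. Unset Printing Implicit Defensive.
Import Order.TTheory GRing.Theory Num.Theory.
Local Open Scope ring_scope.

(* Write b_c(t) = (e^{ct} - 1)/(ct), so that the generating function of
   B^{(q)}_n(x, e) is e^{xt} / prod_i b_{e_i}(t).  The geometric sum
   b_c(t) * sum_{r<j} e^{rct} = j * b_{jc}(t) shows that summing
   e^{(x + sum_i r_i e_i) t} / prod_i b_{e'_i}(t) over the residues r_i < j
   of the scaled parameters e'_i = j e_i gives j^{|J|} times the generating
   function at (x, e), J being the set of scaled indices: this is the multiplication formula behind
   the first equality.  For the second, (1 - e^{-ct})/t = c e^{-ct} b_c(t),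
   hence e^{st} / prod_k ((1 - e^{-d_k t})/t) is e^{(s + s_m) t} divided by
   pi_m prod_k b_{d_k}(t). *)

Section PowerSeriesAlgebra.
Variable R : fieldType.
Local Notation ps := (ps R).
Implicit Types (f g h : ps) (a : R).

Lemma psmul_rev f g n : psmul f g n = \sum_(i < n.+1) f (n - i)%N * g i.
Proof.
rewrite /psmul (reindex_inj rev_ord_inj) /=.
by apply: eq_bigr => i _; rewrite (sub_ordK i).
Qed.

Lemma psmulC : commutative (@psmul R).
Proof.
move=> f g; apply: functional_extensionality => n.
by rewrite psmul_rev; apply: eq_bigr => i _; rewrite mulrC.
Qed.

Lemma psmulA : associative (@psmul R).
Proof.
move=> f g h; apply: functional_extensionality => n.
rewrite [RHS]psmul_rev.
pose c i l := f i * (g (n - i - l)%N * h l).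
transitivity (\sum_(i < n.+1) \sum_(l < n.+1 | (l <= n - i)%N) c i l).
  apply: eq_bigr => /= i _; rewrite psmul_rev big_distrr /=.
  by rewrite (big_ord_narrow_leq (leq_subr _ _)).
rewrite (exchange_big_dep predT) //=; apply: eq_bigr => l _.
transitivity (\sum_(i < n.+1 | (i <= n - l)%N) c i l).
  apply: eq_bigl => i; rewrite -ltnS -(ltnS i) -!subSn ?leq_ord //.
  by rewrite -subn_gt0 -(subn_gt0 i) -!subnDA addnC.
rewrite (big_ord_narrow_leq (leq_subr _ _)) big_distrl /=.
by apply: eq_bigr => i _; rewrite /c -!subnDA addnC mulrA.
Qed.

Lemma psmul1l : left_id (ps1 R) (@psmul R).
Proof.
move=> f; apply: functional_extensionality => n.
rewrite /psmul big_ord_recl subn0 big1 => [|i _]; rewrite /ps1 ?mul1r ?addr0 //.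
by rewrite mul0r.
Qed.

Lemma psmul1r : right_id (ps1 R) (@psmul R).
Proof. by move=> f; rewrite psmulC psmul1l. Qed.

HB.instance Definition _ :=
  Monoid.isComLaw.Build ps (ps1 R) (@psmul R) psmulA psmulC psmul1l.

Definition ps0 : ps := fun _ => 0.
Definition psadd f g : ps := fun n => f n + g n.

Lemma psaddA : associative psadd.
Proof. by move=> f g h; apply: functional_extensionality => n; rewrite /psadd addrA. Qed.

Lemma psaddC : commutative psadd.
Proof. by move=> f g; apply: functional_extensionality => n; rewrite /psadd addrC. Qed.

Lemma psadd0 : left_id ps0 psadd.
Proof. by move=> f; apply: functional_extensionality => n; rewrite /psadd add0r. Qed.

HB.instance Definition _ := Monoid.isComLaw.Build ps ps0 psadd psaddA psaddC psadd0.

Lemma psmul0l : left_zero ps0 (@psmul R).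
Proof.
move=> f; apply: functional_extensionality => n.
by rewrite /psmul big1 // => i _; rewrite mul0r.
Qed.

Lemma psmul0r : right_zero ps0 (@psmul R).
Proof. by move=> f; rewrite psmulC psmul0l. Qed.

HB.instance Definition _ := Monoid.isMulLaw.Build ps ps0 (@psmul R) psmul0l psmul0r.

Lemma psmulDl : left_distributive (@psmul R) psadd.
Proof.
move=> f g h; apply: functional_extensionality => n.
by rewrite /psmul /psadd -big_split; apply: eq_bigr => i _; rewrite mulrDl.
Qed.

Lemma psmulDr : right_distributive (@psmul R) psadd.
Proof. by move=> f g h; rewrite psmulC psmulDl !(psmulC f). Qed.

HB.instance Definition _ := Monoid.isAddLaw.Build ps (@psmul R) psadd psmulDl psmulDr.

Lemma coef_pssum I (r : seq I) (P : pred I) (F : I -> ps) n :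
  (\big[psadd/ps0]_(i <- r | P i) F i) n = \sum_(i <- r | P i) F i n.
Proof.
elim: r => [|i r IH]; first by rewrite !big_nil.
by rewrite !big_cons; case: (P i); rewrite //= /psadd IH.
Qed.

Lemma coef0_psmul f g : psmul f g 0 = f 0%N * g 0%N.
Proof. by rewrite /psmul big_ord_recl big_ord0 addr0. Qed.

Lemma coef0_psprod I (r : seq I) (P : pred I) (F : I -> ps) :
  (\big[@psmul R/ps1 R]_(i <- r | P i) F i) 0%N = \prod_(i <- r | P i) F i 0%N.
Proof.
elim: r => [|i r IH]; first by rewrite !big_nil.
by rewrite !big_cons; case: (P i); rewrite //= coef0_psmul IH.
Qed.

Definition psscale a f : ps := fun n => a * f n.

Lemma psscaleA a b f : psscale a (psscale b f) = psscale (a * b) f.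
Proof. by apply: functional_extensionality => n; rewrite /psscale mulrA. Qed.

Lemma psscale1 f : psscale 1 f = f.
Proof. by apply: functional_extensionality => n; rewrite /psscale mul1r. Qed.

Lemma psmulZl a f g : psmul (psscale a f) g = psscale a (psmul f g).
Proof.
apply: functional_extensionality => n; rewrite /psmul /psscale mulr_sumr.
by apply: eq_bigr => i _; rewrite mulrA.
Qed.

Lemma psmulZr a f g : psmul f (psscale a g) = psscale a (psmul f g).
Proof. by rewrite psmulC psmulZl psmulC. Qed.

Lemma psprodZ I (r : seq I) (P : pred I) (c : I -> R) (F : I -> ps) :
  \big[@psmul R/ps1 R]_(i <- r | P i) psscale (c i) (F i)
  = psscale (\prod_(i <- r | P i) c i) (\big[@psmul R/ps1 R]_(i <- r | P i) F i).
Proof.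
elim: r => [|i r IH]; first by rewrite !big_nil psscale1.
rewrite !big_cons; case: (P i) => //.
by rewrite IH psmulZl psmulZr psscaleA mulrC.
Qed.

Lemma size_psdiv_seq f g n : size (psdiv_seq f g n) = n.+1.
Proof. by elim: n => [|n IH] //=; rewrite size_rcons IH. Qed.

Lemma nth_psdiv_seq f g n i : (i <= n)%N -> nth 0 (psdiv_seq f g n) i = psdiv f g i.
Proof.
elim: n => [|n IH]; first by rewrite leqn0 => /eqP ->.
rewrite leq_eqVlt => /orP[/eqP -> //|lt_in].
by rewrite /= nth_rcons size_psdiv_seq lt_in; apply: IH.
Qed.

Lemma psdivK f g : g 0%N != 0 -> psmul (psdiv f g) g = f.
Proof.
move=> g0; apply: functional_extensionality => -[|n].
  by rewrite coef0_psmul /psdiv /= divfK.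
rewrite psmulC /psmul big_ord_recl /= subn0.
have -> : psdiv f g n.+1 = (f n.+1 - \sum_(1 <= i < n.+2)
    g i * nth 0 (psdiv_seq f g n) (n.+1 - i)%N) / g 0%N.
  by rewrite /psdiv /= nth_rcons size_psdiv_seq ltnn eqxx.
rewrite big_add1 /= big_mkord.
under [X in _ - X]eq_bigr => i _ do rewrite subSS nth_psdiv_seq ?leq_subr //.
by rewrite mulrC divfK // subrK.
Qed.

Lemma psmulIf g : g 0%N != 0 -> injective (fun f => psmul f g).
Proof.
move=> g0 f1 f2 eq_f12; apply: functional_extensionality => n.
elim/ltn_ind: n => n IH.
have := congr1 (fun F => F n) eq_f12; rewrite /psmul !big_ord_recr /= subnn.
under eq_bigr => i _ do rewrite IH //.
by move/addrI/mulIf; apply.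
Qed.

Lemma psdiv_uniq f g h : g 0%N != 0 -> psmul h g = f -> psdiv f g = h.
Proof. by move=> g0 hgf; apply: (psmulIf g0); rewrite psdivK // hgf. Qed.

Definition psX : ps := fun n => (n == 1%N)%:R.

Lemma psmulX f : psmul psX f = fun n => if n is n'.+1 then f n' else 0.
Proof.
apply: functional_extensionality => -[|n]; rewrite /psmul.
  by rewrite big_ord_recl big_ord0 /psX /= mul0r addr0.
rewrite big_ord_recl /psX /= mul0r add0r big_ord_recl /= mul1r subn1 /=.
by rewrite big1 ?addr0 // => i _; rewrite /bump /= mul0r.
Qed.

Lemma psmulX_inj : injective (psmul psX).
Proof.
move=> f g; rewrite !psmulX => eq_fg; apply: functional_extensionality => n.
exact: (congr1 (fun F => F n.+1) eq_fg).
Qed.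

Lemma coef0_bernoulliH q (e : 'I_q -> R) : bernoulliH e 0%N = 1.
Proof.
rewrite /bernoulliH coef0_psprod big1 // => i _.
by rewrite /bern_factor expr0 mul1r invr1.
Qed.

End PowerSeriesAlgebra.

Arguments ps0 {R}.
Arguments psX {R}.
Arguments psadd {R}.
Arguments psscale {R}.

Section Exponentials.
Variable R : numFieldType.

Lemma fact_neq0 n : n`!%:R != 0 :> R.
Proof. by rewrite pnatr_eq0 -lt0n fact_gt0. Qed.

Lemma psexp0 : psexp (0 : R) = ps1 R.
Proof.
apply: functional_extensionality => -[|n]; rewrite /psexp /ps1 expr0n //=.
by rewrite divr1.
by rewrite mul0r.
Qed.

Lemma psexpD (a b : R) : psmul (psexp a) (psexp b) = psexp (a + b).
Proof.
apply: functional_extensionality => n.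
rewrite /psmul /psexp addrC exprDn mulr_suml; apply: eq_bigr => i _.
have le_in : (i <= n)%N by rewrite -ltnS.
have -> : n`!%:R = 'C(n, i)%:R * (i`!%:R * (n - i)`!%:R) :> R.
  by rewrite -!natrM bin_fact.
have bin_neq0 : 'C(n, i)%:R != 0 :> R by rewrite pnatr_eq0 -lt0n bin_gt0.
rewrite -mulr_natr; field.
by rewrite bin_neq0 !fact_neq0.
Qed.

Lemma psexp_sum I (r : seq I) (P : pred I) (c : I -> R) :
  psexp (\sum_(i <- r | P i) c i) = \big[@psmul R/ps1 R]_(i <- r | P i) psexp (c i).
Proof.
elim: r => [|i r IH]; first by rewrite !big_nil psexp0.
by rewrite !big_cons; case: (P i); rewrite // -IH psexpD.
Qed.

Lemma psmulX_bern_factor (c : R) : c != 0 ->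
  psmul psX (bern_factor c) = psscale c^-1 (psadd (psexp c) (psscale (-1) (ps1 R))).
Proof.
move=> c0; rewrite psmulX; apply: functional_extensionality => -[|n].
  by rewrite /psscale /psadd /psexp /ps1 expr0 divr1 mulN1r subrr mulr0.
rewrite /psscale /psadd /psexp /ps1 /bern_factor /= mulr0 addr0 exprS.
by rewrite !mulrA mulVf // mul1r.
Qed.

Lemma psmulX_sylv_factor (c : R) :
  psmul psX (sylv_factor c) = psadd (ps1 R) (psscale (-1) (psexp (- c))).
Proof.
rewrite psmulX; apply: functional_extensionality => -[|n].
  by rewrite /psscale /psadd /psexp /ps1 expr0 divr1 mulN1r subrr.
by rewrite /psscale /psadd /psexp /ps1 /sylv_factor /= add0r mulN1r mulNr.
Qed.

Lemma psexp_geometric_sum (c : R) j :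
  psmul (psadd (psexp c) (psscale (-1) (ps1 R)))
        (\big[psadd/ps0]_(r < j) psexp (r%:R * c))
  = psadd (psexp (j%:R * c)) (psscale (-1) (ps1 R)).
Proof.
rewrite big_distrr /=; apply: functional_extensionality => n; rewrite coef_pssum.
under eq_bigr => r _.
  rewrite psmulDl psmulZl psmul1l psexpD /psadd /psscale mulN1r.
  have -> : c + r%:R * c = r.+1%:R * c by rewrite -natr1 mulrDl mul1r addrC.
  over.
rewrite -(big_mkord xpredT (fun r => psexp (r.+1%:R * c) n - psexp (r%:R * c) n)).
by rewrite telescope_sumr // mul0r psexp0 /psadd /psscale mulN1r.
Qed.

Lemma bern_factor_geometric_sum (c : R) j : c != 0 -> (0 < j)%N ->
  psmul (bern_factor c) (\big[psadd/ps0]_(r < j) psexp (r%:R * c))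
  = psscale j%:R (bern_factor (j%:R * c)).
Proof.
move=> c0 j0; have j_neq0 : j%:R != 0 :> R by rewrite pnatr_eq0 -lt0n.
apply: psmulX_inj.
rewrite psmulA psmulX_bern_factor // psmulZl psexp_geometric_sum psmulZr.
by rewrite psmulX_bern_factor ?mulf_neq0 // psscaleA invfM mulrA divff // mul1r.
Qed.

Lemma sylv_factorE (c : R) : c != 0 ->
  sylv_factor c = psscale c (psmul (psexp (- c)) (bern_factor c)).
Proof.
move=> c0; apply: psmulX_inj.
rewrite psmulX_sylv_factor psmulZr psmulA (psmulC psX) -psmulA.
rewrite psmulX_bern_factor // psmulZr psmulDr psmulZr psexpD psmul1r addNr psexp0.
by rewrite psscaleA divff // psscale1.
Qed.

End Exponentials.

Section HigherBernoulli.
Variable R : numFieldType.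

Definition bernoulli_gf q (x : R) (e : 'I_q -> R) : ps R :=
  psdiv (psexp x) (bernoulliH e).

Lemma bernoulli_gfK q x (e : 'I_q -> R) :
  psmul (bernoulli_gf x e) (bernoulliH e) = psexp x.
Proof. by rewrite psdivK // coef0_bernoulliH oner_neq0. Qed.

Section Multiplication.
Variables (q j : nat) (J : pred 'I_q) (e e' : 'I_q -> R).
Hypothesis j_gt0 : (0 < j)%N.
Hypothesis e_neq0 : forall i, e i != 0.
Hypothesis e'E : forall i, e' i = if J i then j%:R * e i else e i.

Let residues i : ps R :=
  \big[psadd/ps0]_(a : 'I_j | ~~ J i ==> (a == 0 :> nat)) psexp (a%:R * e i).

Lemma bernoulliH_mul_residues :
  psmul (bernoulliH e) (\big[@psmul R/ps1 R]_i residues i)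
  = psscale (j%:R ^+ #|J|) (bernoulliH e').
Proof.
rewrite /bernoulliH -big_split /=.
rewrite (eq_bigr (fun i => psscale (if J i then j%:R else 1) (bern_factor (e' i)))).
  by rewrite psprodZ -big_mkcond prodr_const.
move=> i _; rewrite /residues e'E; case: (J i) => /=.
  by rewrite bern_factor_geometric_sum.
by rewrite (big_pred1 (Ordinal j_gt0)) // mul0r psexp0 psmul1r psscale1.
Qed.

Lemma psexp_sum_residues x :
  \big[psadd/ps0]_(r : {ffun 'I_q -> 'I_j} | [forall i, ~~ J i ==> (r i == 0 :> nat)])
     psexp (x + \sum_(i | J i) (r i)%:R * e i)
  = psmul (psexp x) (\big[@psmul R/ps1 R]_i residues i).
Proof.
rewrite bigA_distr_big_dep big_distrr /=; apply: eq_big => [r|r fixed_r].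
  by apply/forallP/familyP.
rewrite -psexp_sum psexpD [in RHS](bigID J) /= [X in _ + (_ + X)]big1 ?addr0 // => i Ji.
by move/forallP/(_ i): fixed_r; rewrite Ji => /eqP ->; rewrite mul0r.
Qed.

Lemma bernoulli_gf_multiplication x :
  \big[psadd/ps0]_(r : {ffun 'I_q -> 'I_j} | [forall i, ~~ J i ==> (r i == 0 :> nat)])
     bernoulli_gf (x + \sum_(i | J i) (r i)%:R * e i) e'
  = psscale (j%:R ^+ #|J|) (bernoulli_gf x e).
Proof.
have e'0 : bernoulliH e' 0%N != 0 by rewrite coef0_bernoulliH oner_neq0.
apply: (psmulIf e'0); rewrite /= big_distrl /=.
under eq_bigr => r _ do rewrite bernoulli_gfK.
rewrite psexp_sum_residues psmulZl -psmulZr -bernoulliH_mul_residues.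
by rewrite psmulA bernoulli_gfK.
Qed.

End Multiplication.

Lemma sylvester_bernoulli_gf q s (c : 'I_q -> R) : (forall k, c k != 0) ->
  psdiv (psexp s) (\big[@psmul R/ps1 R]_k sylv_factor (c k))
  = psscale (\prod_k c k)^-1 (bernoulli_gf (s + \sum_k c k) c).
Proof.
move=> c_neq0; have prod_neq0 : \prod_k c k != 0 by apply/prodf_neq0.
apply: psdiv_uniq.
  by rewrite coef0_psprod; apply/prodf_neq0 => k _; rewrite /sylv_factor
       expr1 opprK mulf_neq0 ?invr_neq0 ?fact_neq0.
under [X in psmul _ X]eq_bigr => k _ do rewrite sylv_factorE //.
rewrite psprodZ big_split /= -psexp_sum psmulZl psmulZr psscaleA mulVf //.
rewrite psscale1 psmulA psmulC psmulA [psmul _ (bernoulli_gf _ _)]psmulC.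
by rewrite bernoulli_gfK psexpD sumrN addrK.
Qed.

End HigherBernoulli.

Lemma card_ord_geq m k : #|[pred i : 'I_m | (k <= i)%N]| = (m - k)%N.
Proof.
rewrite -sum1_card -[RHS]muln1 -sum_nat_const_nat big_geq_mkord.
by apply: eq_bigl => i; rewrite inE.
Qed.

Lemma natr_dscaled (R : pzSemiRingType) m (d : 'I_m -> nat) j k i :
  (dscaled d j k i)%:R = if (k <= i)%N then j%:R * (d i)%:R else (d i)%:R :> R.
Proof. by rewrite /dscaled ltnNge; case: leqP; rewrite ?natrM. Qed.

Theorem mainTheorem3 (R : numFieldType) (m : nat) (d : 'I_m -> nat) (j k : nat)
    (s : R) :
  (0 < m)%N ->
  (forall i, 0 < d i)%N ->
  (2 <= j)%N ->
  (k <= m)%N ->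
  (forall i : 'I_m, (j %| d i)%N = (i < k)%N) ->
  (j%:R ^- (m - k)) / ((m.-1)`!%:R * (prodd d)%:R) *
    (\sum_(r : {ffun 'I_m -> 'I_j} | [forall i : 'I_m, (i < k)%N ==> (r i == 0%N :> nat)])
       higherBernoulli m.-1
         (s + (sumd d)%:R + \sum_(i : 'I_m | (k <= i)%N) (r i)%:R * (d i)%:R)
         (fun i => (dscaled d j k i)%:R))
  = 1 / ((m.-1)`!%:R * (prodd d)%:R) *
      higherBernoulli m.-1 (s + (sumd d)%:R) (fun i => (d i)%:R)
  /\
  1 / ((m.-1)`!%:R * (prodd d)%:R) *
      higherBernoulli m.-1 (s + (sumd d)%:R) (fun i => (d i)%:R : R)
  = sylvesterW1 s d.
Proof.
move=> _ d_gt0 j_ge2 _ _.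
have d_neq0 i : (d i)%:R != 0 :> R by rewrite pnatr_eq0 -lt0n.
have j_gt0 : (0 < j)%N by apply: leq_trans j_ge2.
have jpow_neq0 : j%:R ^+ (m - k) != 0 :> R by rewrite expf_neq0 // pnatr_eq0 -lt0n.
have pi_neq0 : (prodd d)%:R != 0 :> R by rewrite pnatr_eq0 -lt0n prodn_gt0.
split.
  have := congr1 (fun F => F m.-1) (@bernoulli_gf_multiplication R m j
    [pred i : 'I_m | (k <= i)%N] _ _ j_gt0 d_neq0 (natr_dscaled R d j k) (s + (sumd d)%:R)).
  rewrite coef_pssum card_ord_geq /= /psscale /higherBernoulli -mulr_sumr.
  have fixedE (r : {ffun 'I_m -> 'I_j}) :
      [forall i : 'I_m, (i < k)%N ==> (r i == 0%N :> nat)]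
      = [forall i : 'I_m, ~~ (k <= i)%N ==> (r i == 0%N :> nat)].
    by apply: eq_forallb => i; rewrite ltnNge.
  rewrite (eq_bigl _ _ fixedE) /bernoulli_gf => ->.
  by field; rewrite jpow_neq0 pi_neq0 fact_neq0.
rewrite /sylvesterW1 (sylvester_bernoulli_gf s d_neq0) /psscale /higherBernoulli.
rewrite -natr_prod -natr_sum /bernoulli_gf.
by field; rewrite pi_neq0 fact_neq0.
Qed.
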